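(* Let $\sigma\in\mathcal T$ be an admissible type. For any $0\le r_1<r_2$ there is $\alpha\in\mathbb Q_+$ such that $\rho_{\mathrm{Id}}(r_1)\le(\alpha\cdot\sigma)(1,0)\le\omega_{\mathrm{Id}}(r_2)$.
   Context: Standing setting: $(X,\|\cdot\|)$ is a separable infinite-dimensional Banach space and $d$ is a translation-invariant stable pseudometric on $X$ such that $\mathrm{Id}\colon(X,\|\cdot\|)\to(X,d)$ is a coarse equivalence, with $\omega_{\mathrm{Id}}(t)=\sup\{d(x,y):\|x-y\|\le t\}$, $\rho_{\mathrm{Id}}(t)=\inf\{d(x,y):\|x-y\|\ge t\}$. $\Delta$ is a countable $\|\cdot\|$-dense $\mathbb Q$-linear subspace; $\bar x(\lambda,y)=d(\lambda x,y)$; $\mathcal T$ is the pointwise closure of $\{\bar x:x\in\Delta\}$ in $\mathbb R^{\mathbb Q\times\Delta}$; a defining sequence for $\sigma$ is $(x_n)\subseteq\Delta$ with $\bar x_n\to\sigma$. Dilation: for $\alpha\in\mathbb Q$, $\alpha\cdot\sigma=\lim_n\overline{\alpha x_n}$ for any defining sequence $(x_n)$ of $\sigma$; equivalently $(\alpha\cdot\sigma)(\lambda,x)=\sigma(\lambda\alpha,x)$. With $\gamma=\inf_{t>0}\omega_{\mathrm{Id}}(t)$, a type $\sigma$ is admissible if $\sigma(1,0)>\gamma$. *)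

From Stdlib Require Import Reals Lra QArith Qreals List ClassicalEpsilon.
Open Scope R_scope.

Record NormedSpace := {
  carrier :> Type;
  vzero : carrier;
  vadd : carrier -> carrier -> carrier;
  vopp : carrier -> carrier;
  vscal : R -> carrier -> carrier;
  vnorm : carrier -> R;
  vadd_assoc : forall x y z, vadd x (vadd y z) = vadd (vadd x y) z;
  vadd_comm : forall x y, vadd x y = vadd y x;
  vadd_0l : forall x, vadd vzero x = x;
  vadd_oppl : forall x, vadd (vopp x) x = vzero;
  vscal_1 : forall x, vscal 1 x = x;
  vscal_assoc : forall a b x, vscal a (vscal b x) = vscal (a * b) x;
  vscal_addr : forall a x y, vscal a (vadd x y) = vadd (vscal a x) (vscal a y);
  vscal_addl : forall a b x, vscal (a + b) x = vadd (vscal a x) (vscal b x);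
  vnorm_eq0 : forall x, vnorm x = 0 -> x = vzero;
  vnorm_scal : forall a x, vnorm (vscal a x) = Rabs a * vnorm x;
  vnorm_triangle : forall x y, vnorm (vadd x y) <= vnorm x + vnorm y
}.

Arguments vzero {n}.
Arguments vadd {n}.
Arguments vopp {n}.
Arguments vscal {n}.
Arguments vnorm {n}.

Definition vsub {X : NormedSpace} (x y : X) : X := vadd x (vopp y).

Definition complete (X : NormedSpace) : Prop :=
  forall u : nat -> X,
    (forall eps, 0 < eps -> exists N, forall n m, (N <= n)%nat -> (N <= m)%nat ->
        vnorm (vsub (u n) (u m)) < eps) ->
    exists l : X, forall eps, 0 < eps -> exists N, forall n, (N <= n)%nat ->
        vnorm (vsub (u n) l) < eps.

Definition separable (X : NormedSpace) : Prop :=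
  exists e : nat -> X, forall x eps, 0 < eps -> exists n, vnorm (vsub x (e n)) < eps.

Definition lincomb {X : NormedSpace} (L : list (R * X)) : X :=
  fold_right (fun p acc => vadd (vscal (fst p) (snd p)) acc) vzero L.

Definition infinite_dimensional (X : NormedSpace) : Prop :=
  forall l : list X, exists x : X,
    forall L : list (R * X), (forall p, In p L -> In (snd p) l) -> x <> lincomb L.

Definition pseudometric {X : Type} (d : X -> X -> R) : Prop :=
  (forall x, d x x = 0) /\ (forall x y, d x y = d y x) /\
  (forall x y z, d x z <= d x y + d y z).

Definition translation_invariant {X : NormedSpace} (d : X -> X -> R) : Prop :=
  forall x y z, d (vadd x z) (vadd y z) = d x y.

Definition seq_lim (u : nat -> R) (l : R) : Prop :=
  forall eps, 0 < eps -> exists N, forall n, (N <= n)%nat -> Rabs (u n - l) < eps.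

(* Stability (Krivine–Maurey): for d-bounded sequences, iterated limits
   commute whenever both exist. *)
Definition stable {X : NormedSpace} (d : X -> X -> R) : Prop :=
  forall (x y : nat -> X) (M : R),
    (forall n, d (x n) vzero <= M) -> (forall m, d (y m) vzero <= M) ->
    forall (a b : R) (ra : nat -> R) (cb : nat -> R),
      (forall n, seq_lim (fun m => d (x n) (y m)) (ra n)) -> seq_lim ra a ->
      (forall m, seq_lim (fun n => d (x n) (y m)) (cb m)) -> seq_lim cb b ->
      a = b.

(* Id : (X,||.||) -> (X,d) is a coarse equivalence: Id and its inverse Id
   are both uniformly bornologous (coarse), Id being a bijection. *)
Definition id_coarse_equivalence {X : NormedSpace} (d : X -> X -> R) : Prop :=
  (forall t, exists M, forall x y : X, vnorm (vsub x y) <= t -> d x y <= M) /\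
  (forall s, exists t, forall x y : X, d x y <= s -> vnorm (vsub x y) <= t).

Definition is_glb (E : R -> Prop) (m : R) : Prop :=
  (forall x, E x -> m <= x) /\ (forall b, (forall x, E x -> b <= x) -> b <= m).

Definition Rsup (E : R -> Prop) : R := epsilon (inhabits 0) (fun s => is_lub E s).
Definition Rinf (E : R -> Prop) : R := epsilon (inhabits 0) (fun s => is_glb E s).

Definition omega_Id {X : NormedSpace} (d : X -> X -> R) (t : R) : R :=
  Rsup (fun r => exists x y : X, vnorm (vsub x y) <= t /\ r = d x y).

Definition rho_Id {X : NormedSpace} (d : X -> X -> R) (t : R) : R :=
  Rinf (fun r => exists x y : X, t <= vnorm (vsub x y) /\ r = d x y).

Definition gamma_Id {X : NormedSpace} (d : X -> X -> R) : R :=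
  Rinf (fun r => exists t, 0 < t /\ r = omega_Id d t).

Definition countable_dense_Qsubspace {X : NormedSpace} (Delta : X -> Prop) : Prop :=
  (exists e : nat -> X, forall x, Delta x <-> exists n, e n = x) /\
  (forall x eps, 0 < eps -> exists y, Delta y /\ vnorm (vsub x y) < eps) /\
  Delta vzero /\
  (forall x y, Delta x -> Delta y -> Delta (vadd x y)) /\
  (forall (q : Q) x, Delta x -> Delta (vscal (Q2R q) x)).

Definition xbar {X : NormedSpace} (d : X -> X -> R) (x : X) : Q -> X -> R :=
  fun lam y => d (vscal (Q2R lam) x) y.

(* sigma lies in the pointwise (product-topology) closure in R^(Q x Delta)
   of { xbar x : x in Delta }. *)
Definition in_T {X : NormedSpace} (d : X -> X -> R) (Delta : X -> Prop)
  (sigma : Q -> X -> R) : Prop :=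
  forall F : list (Q * X), (forall p, In p F -> Delta (snd p)) ->
  forall eps, 0 < eps ->
  exists x, Delta x /\
    forall p, In p F -> Rabs (xbar d x (fst p) (snd p) - sigma (fst p) (snd p)) < eps.

Definition dil {X : Type} (alpha : Q) (sigma : Q -> X -> R) : Q -> X -> R :=
  fun lam y => sigma (lam * alpha)%Q y.

Definition admissible {X : NormedSpace} (d : X -> X -> R) (sigma : Q -> X -> R) : Prop :=
  gamma_Id d < sigma 1%Q vzero.

From Stdlib Require Import Reals QArith Qreals.
From Stdlib Require Import Lra Lia Classical ClassicalEpsilon List.
Open Scope R_scope.

(* Say that σ is approximated at norm s if it lies in the closure of the x̄ with
   x ∈ Δ and ‖x‖ ≥ s.  This property is downward closed; it holds for some
   s > 0 by admissibility (an x̄ close to σ has d(x,0) near σ(1,0) > ω(s)), and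
   only for bounded s by coarseness of Id⁻¹.  Let L be the supremum of such s
   and pick a rational α with r₁ < αL < r₂.  Near-approximants x of norm at
   least r₁/α give ‖αx‖ ≥ r₁, whence ρ(r₁) ≤ σ(α,0); since σ is not
   approximated at norm r₂/α, all x̄ in some neighbourhood of σ satisfy
   ‖αx‖ < r₂, whence σ(α,0) ≤ ω(r₂). *)

Lemma Q2R_dense (a b : R) : a < b -> exists q : Q, a < Q2R q < b.
Proof.
  intros Hab.
  assert (Hpos : 0 < / (b - a)) by (apply Rinv_0_lt_compat; lra).
  destruct (archimed (/ (b - a))) as [Hk1 _].
  destruct (up (/ (b - a))) as [|p|p].
  - simpl in Hk1; lra.
  - destruct (archimed (a * IZR (Zpos p))) as [Hm1 Hm2].
    exists (Qmake (up (a * IZR (Zpos p))) p).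
    unfold Q2R; simpl.
    assert (Hp : 0 < IZR (Zpos p)) by (apply IZR_lt; lia).
    set (m := IZR (up (a * IZR (Zpos p)))) in *.
    assert (Hba : 1 < (b - a) * IZR (Zpos p)).
    { apply Rmult_lt_compat_l with (r := b - a) in Hk1; [|lra].
      rewrite Rinv_r in Hk1; lra. }
    split; apply Rmult_lt_reg_r with (IZR (Zpos p)); try lra;
      rewrite Rmult_assoc, Rinv_l by lra; nra.
  - assert (IZR (Zneg p) < 0) by (apply IZR_lt; lia). lra.
Qed.

Lemma exists_rational_scale (L r1 r2 : R) : 0 < L -> 0 <= r1 -> r1 < r2 ->
  exists q : Q, 0 < Q2R q /\ r1 / Q2R q < L /\ L < r2 / Q2R q.
Proof.
  intros HL Hr1 Hr12.
  destruct (Q2R_dense (r1 / L) (r2 / L)) as [q [Hq1 Hq2]].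
  { apply Rmult_lt_compat_r; [apply Rinv_0_lt_compat|]; lra. }
  assert (Hr1L : 0 <= r1 / L)
    by (apply Rmult_le_pos; [| left; apply Rinv_0_lt_compat]; lra).
  assert (H1 : r1 < Q2R q * L).
  { replace r1 with (r1 / L * L) by (field; lra). apply Rmult_lt_compat_r; lra. }
  assert (H2 : Q2R q * L < r2).
  { replace r2 with (r2 / L * L) by (field; lra). apply Rmult_lt_compat_r; lra. }
  assert (Hq : 0 < Q2R q) by lra.
  exists q. split; [exact Hq | split]; apply Rmult_lt_reg_l with (Q2R q); auto.
  - replace (Q2R q * (r1 / Q2R q)) with r1 by (field; lra). exact H1.
  - replace (Q2R q * (r2 / Q2R q)) with r2 by (field; lra). exact H2.
Qed.

Lemma is_lub_Rsup (E : R -> Prop) : bound E -> (exists x, E x) -> is_lub E (Rsup E).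
Proof.
  intros Hb Hn. destruct (completeness E Hb Hn) as [m Hm].
  unfold Rsup. apply epsilon_spec. exists m; exact Hm.
Qed.

Lemma is_glb_Rinf (E : R -> Prop) (b : R) :
  (forall x, E x -> b <= x) -> (exists x, E x) -> is_glb E (Rinf E).
Proof.
  intros Hb [x0 Hx0].
  destruct (completeness (fun y => E (- y))) as [m [Hm1 Hm2]].
  - exists (- b). intros y Hy. apply Hb in Hy. lra.
  - exists (- x0). rewrite Ropp_involutive. exact Hx0.
  - unfold Rinf. apply epsilon_spec. exists (- m). split.
    + intros x Hx. enough (- x <= m) by lra.
      apply Hm1. rewrite Ropp_involutive; exact Hx.
    + intros b' Hb'. enough (m <= - b') by lra.
      apply Hm2. intros y Hy. apply Hb' in Hy. lra.
Qed.

Lemma lub_downward_closed (E : R -> Prop) (L s : R) :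
  is_lub E L -> (forall s s', s' <= s -> E s -> E s') -> s < L -> E s.
Proof.
  intros [_ HL] Hdown Hs. apply NNPP. intros Hn.
  enough (L <= s) by lra.
  apply HL. intros s' Hs'. apply Rnot_lt_le. intros Hlt.
  apply Hn, (Hdown s'); [lra | exact Hs'].
Qed.

Section NormedSpaceFacts.
Variable X : NormedSpace.

Lemma vopp0 : vopp (@vzero X) = vzero.
Proof.
  pose proof (vadd_oppl X vzero) as H. rewrite vadd_comm, vadd_0l in H. exact H.
Qed.

Lemma vsub0 (x : X) : vsub x vzero = x.
Proof. unfold vsub. rewrite vopp0, vadd_comm, vadd_0l. reflexivity. Qed.

Lemma vscal0 (x : X) : vscal 0 x = vzero.
Proof.
  set (z := vscal 0 x).
  assert (Hz : vadd z z = z) by (unfold z; rewrite <- vscal_addl; f_equal; lra).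
  assert (H : vadd (vopp z) (vadd z z) = vadd (vopp z) z) by (rewrite Hz; reflexivity).
  rewrite vadd_assoc, vadd_oppl, vadd_0l in H. exact H.
Qed.

Lemma vnorm0 : vnorm (@vzero X) = 0.
Proof. rewrite <- (vscal0 vzero), vnorm_scal, Rabs_R0. lra. Qed.

Lemma vnorm_scal_nonneg (c : R) (x : X) : 0 <= c -> vnorm (vscal c x) = c * vnorm x.
Proof. intros Hc. rewrite vnorm_scal, Rabs_pos_eq; lra. Qed.

End NormedSpaceFacts.

Section Moduli.
Variables (X : NormedSpace) (d : X -> X -> R).
Hypothesis Hpm : pseudometric d.

Lemma pseudometric_ge0 (x y : X) : 0 <= d x y.
Proof.
  destruct Hpm as [Hdd [Hsym Htri]].
  pose proof (Htri x y x) as H. rewrite Hdd, (Hsym y x) in H. lra.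
Qed.

Lemma rho_Id_le (t : R) (x y : X) : t <= vnorm (vsub x y) -> rho_Id d t <= d x y.
Proof.
  intros Hxy.
  assert (Hg : is_glb (fun r => exists x y : X, t <= vnorm (vsub x y) /\ r = d x y)
                      (rho_Id d t)).
  { apply is_glb_Rinf with 0.
    - intros r [x' [y' [_ ->]]]. apply pseudometric_ge0.
    - exists (d x y), x, y. auto. }
  apply (proj1 Hg). exists x, y. auto.
Qed.

Hypothesis Hbor : forall t, exists M, forall x y : X, vnorm (vsub x y) <= t -> d x y <= M.

Lemma omega_Id_ge (t : R) (x y : X) : vnorm (vsub x y) <= t -> d x y <= omega_Id d t.
Proof.
  intros Hxy.
  assert (Hl : is_lub (fun r => exists x y : X, vnorm (vsub x y) <= t /\ r = d x y)
                      (omega_Id d t)).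
  { apply is_lub_Rsup.
    - destruct (Hbor t) as [M HM]. exists M. intros r [x' [y' [Hxy' ->]]]. auto.
    - exists (d x y), x, y. auto. }
  apply (proj1 Hl). exists x, y. auto.
Qed.

Lemma omega_Id_ge0 (t : R) : 0 <= t -> 0 <= omega_Id d t.
Proof.
  intros Ht. apply Rle_trans with (d vzero vzero); [apply pseudometric_ge0|].
  apply omega_Id_ge. rewrite vsub0, vnorm0. exact Ht.
Qed.

Lemma gamma_Id_lt (a : R) : gamma_Id d < a -> exists t, 0 < t /\ omega_Id d t < a.
Proof.
  intros Ha. apply NNPP. intros Hn.
  assert (Hg : is_glb (fun r => exists t, 0 < t /\ r = omega_Id d t) (gamma_Id d)).
  { apply is_glb_Rinf with 0.
    - intros r [t [Ht ->]]. apply omega_Id_ge0; lra.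
    - exists (omega_Id d 1), 1. split; [lra | reflexivity]. }
  enough (a <= gamma_Id d) by lra.
  apply (proj2 Hg). intros r [t [Ht ->]].
  apply Rnot_lt_le. intros Hlt. apply Hn. eauto.
Qed.

End Moduli.

Definition near_type {X : NormedSpace} (d : X -> X -> R) (sigma : Q -> X -> R)
  (F : list (Q * X)) (eps : R) (x : X) : Prop :=
  forall p, In p F -> Rabs (xbar d x (fst p) (snd p) - sigma (fst p) (snd p)) < eps.

Definition approximated_at_norm {X : NormedSpace} (d : X -> X -> R)
  (Delta : X -> Prop) (sigma : Q -> X -> R) (s : R) : Prop :=
  forall eps, 0 < eps -> forall F : list (Q * X), (forall p, In p F -> Delta (snd p)) ->
  exists x, Delta x /\ near_type d sigma F eps x /\ s <= vnorm x.

Section ApproximationNorms.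
Variables (X : NormedSpace) (d : X -> X -> R) (Delta : X -> Prop) (sigma : Q -> X -> R).
Hypothesis HD0 : Delta vzero.
Hypothesis HT : in_T d Delta sigma.

Let approximated := approximated_at_norm d Delta sigma.

Lemma in_T_near_origin (lam : Q) (F : list (Q * X)) (eps : R) :
  (forall p, In p F -> Delta (snd p)) -> 0 < eps ->
  exists x, Delta x /\ near_type d sigma F eps x /\
    Rabs (d (vscal (Q2R lam) x) vzero - sigma lam vzero) < eps.
Proof.
  intros HF Heps.
  destruct (HT ((lam, vzero) :: F)) with (eps := eps) as [x [Hx Hnear]];
    [intros p [<- | Hp]; auto | exact Heps |].
  exists x. split; [exact Hx | split].
  - intros p Hp. apply Hnear. right; exact Hp.
  - apply (Hnear (lam, vzero)). left; reflexivity.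
Qed.

Lemma approximated_near_origin (lam : Q) (s eps : R) :
  approximated s -> 0 < eps ->
  exists x, s <= vnorm x /\ Rabs (d (vscal (Q2R lam) x) vzero - sigma lam vzero) < eps.
Proof.
  intros Hs Heps.
  destruct (Hs eps Heps ((lam, vzero) :: nil)) as [x [_ [Hnear Hx]]];
    [intros p [<- | []]; auto |].
  exists x. split; [exact Hx |]. apply (Hnear (lam, vzero)). left; reflexivity.
Qed.

Lemma approximated_antitone (s s' : R) : s' <= s -> approximated s -> approximated s'.
Proof.
  intros Hs Happ eps Heps F HF.
  destruct (Happ eps Heps F HF) as [x [Hx [Hnear Hnx]]].
  exists x. repeat split; auto; lra.
Qed.

Hypothesis Hpm : pseudometric d.
Hypothesis Hce : id_coarse_equivalence d.

Lemma approximated_of_omega_lt (t : R) : omega_Id d t < sigma 1%Q vzero -> approximated t.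
Proof.
  intros Hom eps Heps F HF.
  destruct (in_T_near_origin 1%Q F (Rmin eps (sigma 1%Q vzero - omega_Id d t)) HF)
    as [x [Hx [Hnear Horig]]]; [apply Rmin_pos; lra |].
  exists x. split; [exact Hx | split].
  - intros p Hp. eapply Rlt_le_trans; [apply Hnear, Hp | apply Rmin_l].
  - rewrite RMicromega.Q2R_1, vscal_1 in Horig.
    pose proof (Rmin_r eps (sigma 1%Q vzero - omega_Id d t)).
    apply Rabs_def2 in Horig.
    apply Rnot_lt_le. intros Hlt.
    assert (d x vzero <= omega_Id d t) by (apply omega_Id_ge; [apply Hce | rewrite vsub0; lra]).
    lra.
Qed.

Lemma approximated_bounded : exists T, forall s, approximated s -> s <= T.
Proof.
  destruct (proj2 Hce (sigma 1%Q vzero + 1)) as [T Hnorm].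
  exists T. intros s Hs.
  destruct (approximated_near_origin 1%Q s 1 Hs) as [x [Hx Horig]]; [lra |].
  rewrite RMicromega.Q2R_1, vscal_1 in Horig. apply Rabs_def2 in Horig.
  assert (vnorm (vsub x vzero) <= T) by (apply Hnorm; lra).
  rewrite vsub0 in *. lra.
Qed.

Lemma rho_Id_le_approximated (lam : Q) (s : R) :
  0 < Q2R lam -> approximated s -> rho_Id d (Q2R lam * s) <= sigma lam vzero.
Proof.
  intros Hlam Hs. apply Rnot_lt_le. intros Hlt.
  destruct (approximated_near_origin lam s (rho_Id d (Q2R lam * s) - sigma lam vzero) Hs)
    as [x [Hx Horig]]; [lra |].
  apply Rabs_def2 in Horig.
  assert (rho_Id d (Q2R lam * s) <= d (vscal (Q2R lam) x) vzero); [|lra].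
  apply rho_Id_le; [exact Hpm |].
  rewrite vsub0, vnorm_scal_nonneg by lra.
  apply Rmult_le_compat_l; lra.
Qed.

Lemma not_approximated_neighbourhood (s : R) : ~ approximated s ->
  exists eps F, 0 < eps /\ (forall p, In p F -> Delta (snd p)) /\
    forall x, Delta x -> near_type d sigma F eps x -> vnorm x < s.
Proof.
  intros Hn. apply NNPP. intros Hnn. apply Hn. intros eps Heps F HF.
  apply NNPP. intros Hno. apply Hnn. exists eps, F. repeat split; auto.
  intros x Hx Hnear. apply Rnot_le_lt. intros Hle. apply Hno. eauto.
Qed.

Lemma sigma_le_omega_Id (lam : Q) (s : R) :
  0 <= Q2R lam -> ~ approximated s -> sigma lam vzero <= omega_Id d (Q2R lam * s).
Proof.
  intros Hlam Hs.
  destruct (not_approximated_neighbourhood s Hs) as [eps [F [Heps [HF Hsmall]]]].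
  apply Rnot_lt_le. intros Hlt.
  destruct (in_T_near_origin lam F (Rmin (sigma lam vzero - omega_Id d (Q2R lam * s)) eps) HF)
    as [x [Hx [Hnear Horig]]]; [apply Rmin_pos; lra |].
  assert (Hxs : vnorm x < s).
  { apply Hsmall; [exact Hx |].
    intros p Hp. eapply Rlt_le_trans; [apply Hnear, Hp | apply Rmin_r]. }
  apply Rabs_def2 in Horig.
  pose proof (Rmin_l (sigma lam vzero - omega_Id d (Q2R lam * s)) eps).
  assert (d (vscal (Q2R lam) x) vzero <= omega_Id d (Q2R lam * s)); [|lra].
  apply omega_Id_ge; [apply Hce |].
  rewrite vsub0, vnorm_scal_nonneg by lra.
  apply Rmult_le_compat_l; lra.
Qed.

End ApproximationNorms.

Theorem lemma5p2 (X : NormedSpace) (d : X -> X -> R) (Delta : X -> Prop)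
  (Hcompl : complete X) (Hsep : separable X) (Hinf : infinite_dimensional X)
  (Hpm : pseudometric d) (Hti : translation_invariant d) (Hst : stable d)
  (Hce : id_coarse_equivalence d) (HDelta : countable_dense_Qsubspace Delta)
  (sigma : Q -> X -> R) (HT : in_T d Delta sigma) (Hadm : admissible d sigma) :
  forall r1 r2 : R, 0 <= r1 -> r1 < r2 ->
  exists alpha : Q, (0 < alpha)%Q /\
    rho_Id d r1 <= dil alpha sigma 1%Q vzero /\
    dil alpha sigma 1%Q vzero <= omega_Id d r2.
Proof.
  intros r1 r2 Hr1 Hr12.
  destruct HDelta as [_ [_ [HD0 _]]].
  set (P := approximated_at_norm d Delta sigma).
  destruct (gamma_Id_lt X d Hpm (proj1 Hce) _ Hadm) as [t0 [Ht0 Hom]].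
  assert (Pt0 : P t0) by (apply approximated_of_omega_lt; auto).
  assert (HL : is_lub P (Rsup P)).
  { apply is_lub_Rsup; [exact (approximated_bounded X d Delta sigma HD0 Hce) | eauto]. }
  assert (HLpos : 0 < Rsup P) by (apply (proj1 HL) in Pt0; lra).
  destruct (exists_rational_scale (Rsup P) r1 r2 HLpos Hr1 Hr12) as [q [Hq [Hq1 Hq2]]].
  exists q. split; [now apply Rlt_Qlt; rewrite RMicromega.Q2R_0 |].
  unfold dil. set (lam := (1 * q)%Q).
  assert (Hlam : Q2R lam = Q2R q) by (unfold lam; rewrite Q2R_mult, RMicromega.Q2R_1; ring).
  split.
  - replace r1 with (Q2R lam * (r1 / Q2R q)) by (rewrite Hlam; field; lra).
    apply (rho_Id_le_approximated X d Delta); auto; [lra |].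
    apply (lub_downward_closed P (Rsup P)); auto. apply approximated_antitone.
  - replace r2 with (Q2R lam * (r2 / Q2R q)) by (rewrite Hlam; field; lra).
    apply (sigma_le_omega_Id X d Delta); auto; [lra |].
    intros Hp. apply (proj1 HL) in Hp. lra.
Qed.
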